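(* Let $p_s\in(0,1)$, $p_f=1-p_s$, and let $p_{-1},p_0,p_1\in[0,1]$ with $p_{-1}+p_0+p_1=1$. Let $(h(t))$ be i.i.d. with $\mathbb{P}[h(t)=1]=p_s$, $\mathbb{P}[h(t)=0]=p_f$, and let $(\delta(t))$ be i.i.d., independent of $(h(t))$, with $\mathbb{P}[\delta(t)=k]=p_k$ for $k\in\{-1,0,1\}$. Define the positive-integer-valued process $$\Delta(t)=\begin{cases}\max\{1,\delta(t)+1\}, & h(t)=1,\\ \max\{1,\ \Delta(t-1)+\delta(t)-\delta(t-1)+1\}, & h(t)=0.\end{cases}$$ Let $F=1-p_s(1-p_{-1})$. Then the stationary distribution $\pi_{k,i}=\lim_{t\to\infty}\mathbb{P}[\delta(t)=k,\Delta(t)=i]$, $k\in\{-1,0,1\}$, $i\ge1$, of the Markov chain $(\delta(t),\Delta(t))$ is $$\pi_{k,i}=\begin{cases} p_{-1}p_s\big(1+p_f(1-p_{-1})\big), & k=-1,\ i=1,\\ p_{-1}p_sp_f^{\,i-1}F, & k=-1,\ i\ge2,\\ p_kp_s, & k\in\{0,1\},\ i=k+1,\\ p_kp_sp_f(1-p_{-1}), & k\in\{0,1\},\ i=k+2,\\ p_kp_sp_f^{\,i-2-k}F, & k\in\{0,1\},\ i\ge k+3,\end{cases}$$ and $\pi_{k,i}=0$ for $k\in\{0,1\}$, $1\le i\le k$.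
   Context: Model: $h(t)=1$ means successful decoding at the receiver in slot $t$; $\delta(t)\in\{-1,0,1\}$ is the random clock drift (in slots) of the receiver's clock relative to the transmitter's clock in slot $t$; $\Delta(t)$ is the age of information at the receiver. *)

From Stdlib Require Import Reals ZArith Lra Lia List.
Import ListNotations.
Open Scope R_scope.

Definition pk (pm p0 p1 : R) (k : Z) : R :=
  if Z.eqb k (-1) then pm else if Z.eqb k 0 then p0 else if Z.eqb k 1 then p1 else 0.

Definition ind (b : bool) : R := if b then 1 else 0.

Definition drifts : list Z := [(-1)%Z; 0%Z; 1%Z].

Definition fail_step (k' : Z) (j : nat) (k : Z) (i : nat) : bool :=
  Z.eqb (Z.max 1 (Z.of_nat j + k - k' + 1)) (Z.of_nat i).

(* Joint law  law t k i = P[delta(t) = k, Delta(t) = i], computed by the exact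
   one-step recursion of the process, starting from an arbitrary initial law
   mu0 of (delta(0), Delta(0)).  Since h(t) and delta(t) are independent of each
   other and of the past,
     P[delta(t)=k, Delta(t)=i]
       = p_k p_s [i = max{1,k+1}]
       + p_k p_f sum_{k' in {-1,0,1}} sum_{j>=1} P[delta(t-1)=k',Delta(t-1)=j]
                                           [max{1, j+k-k'+1} = i].
   Only j <= i+1 can satisfy max{1, j+k-k'+1} = i (as k - k' >= -2), so the inner
   sum over j is taken over j = 1 .. i+2 (finite, exact). *)
Fixpoint law (ps pm p0 p1 : R) (mu0 : Z -> nat -> R) (t : nat) (k : Z) (i : nat)
  : R :=
  match t with
  | O => mu0 k i
  | S t' =>
      pk pm p0 p1 k *
      (ps * ind (Z.eqb (Z.of_nat i) (Z.max 1 (k + 1)))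
       + (1 - ps) *
         fold_right Rplus 0
           (map (fun k' =>
              sum_f_R0 (fun n => law ps pm p0 p1 mu0 t' k' (S n)
                                 * ind (fail_step k' (S n) k i)) (S i))
              drifts))
  end.

Definition pi_stat (ps pm p0 p1 : R) (k : Z) (i : nat) : R :=
  let pf := 1 - ps in
  let F := 1 - ps * (1 - pm) in
  if Z.eqb k (-1) then
    (if Nat.eqb i 1 then pm * ps * (1 + pf * (1 - pm))
     else pm * ps * pf ^ (i - 1) * F)
  else
    let kn := Z.to_nat k in
    let p := pk pm p0 p1 k in
    if Nat.leb i kn then 0
    else if Nat.eqb i (kn + 1) then p * ps
    else if Nat.eqb i (kn + 2) then p * ps * pf * (1 - pm)
    else p * ps * pf ^ (i - 2 - kn) * F.

From Pilot Require Import Defs.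
From Stdlib Require Import Reals ZArith Lra Lia List.
(* [Reals] shadows the indicator [ind] of Defs. *)
Import Defs.
Open Scope R_scope.

(* Write [step] for the one-step map sending the law of (delta(t-1), Delta(t-1)) to
   that of (delta(t), Delta(t)); [pi_stat] is a fixed point of it.  The map contracts
   the l1 distance between two laws by the factor p_f: in a success slot both laws
   are sent to the same point, and in a failure slot with new drift k each state
   (k', j) is moved to a single value of Delta, which can be i only if j <= i + 2.
   So the error mass on {Delta <= N + 1} at time t + 1 is at most p_f times the
   error mass on {Delta <= N + 3} at time t, and after t slots the error at a fixed
   state is at most p_f^t times the total mass of mu0 and pi, which is finite
   because pi decays geometrically. *)

Lemma sum_f_R0_single (f : nat -> R) N n0 :
  (n0 <= N)%nat -> (forall n, (n <= N)%nat -> n <> n0 -> f n = 0) ->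
  sum_f_R0 f N = f n0.
Proof.
  induction N as [|N IH]; intros Hn0 Hf.
  - replace n0 with 0%nat by lia. reflexivity.
  - simpl. destruct (Nat.eq_dec n0 (S N)) as [->|Hne].
    + rewrite sum_eq_R0 by (intros n Hn; apply Hf; lia). ring.
    + rewrite IH, (Hf (S N)) by (lia || (intros; apply Hf; lia)). ring.
Qed.

Lemma sum_f_R0_le_upper (f : nat -> R) m M :
  (forall n, 0 <= f n) -> (m <= M)%nat -> sum_f_R0 f m <= sum_f_R0 f M.
Proof.
  intros Hf HmM. induction HmM as [|M _ IH]; [lra|].
  rewrite tech5. specialize (Hf (S M)). lra.
Qed.

Lemma term_le_sum_f_R0 (f : nat -> R) n N :
  (forall n, 0 <= f n) -> (n <= N)%nat -> f n <= sum_f_R0 f N.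
Proof.
  intros Hf Hn. apply Rle_trans with (sum_f_R0 f n); [|now apply sum_f_R0_le_upper].
  destruct n as [|n]; simpl; [lra|]. pose proof (cond_pos_sum f n Hf). lra.
Qed.

Lemma sum_f_R0_swap (f : nat -> nat -> R) N M :
  sum_f_R0 (fun n => sum_f_R0 (f n) M) N =
  sum_f_R0 (fun m => sum_f_R0 (fun n => f n m) N) M.
Proof.
  induction N as [|N IH]; simpl; [reflexivity|].
  rewrite IH, <- plus_sum. reflexivity.
Qed.

Lemma geometric_partial_sum_le (x : R) N :
  0 <= x < 1 -> sum_f_R0 (fun n => x ^ n) N * (1 - x) <= 1.
Proof.
  intros Hx. pose proof (GP_finite x N). pose proof (pow_le x (N + 1)). nra.
Qed.

Lemma pow_le_pow_of_le_1 (x : R) m n :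
  0 <= x <= 1 -> (m <= n)%nat -> x ^ n <= x ^ m.
Proof.
  intros Hx Hmn. induction Hmn as [|n _ IH]; simpl; [lra|].
  pose proof (pow_le x n (proj1 Hx)). nra.
Qed.

Lemma pow_unit_interval (x : R) n : 0 <= x <= 1 -> 0 <= x ^ n <= 1.
Proof.
  intros Hx. split; [now apply pow_le|].
  rewrite <- (pow_O x). apply pow_le_pow_of_le_1; [exact Hx | lia].
Qed.

Lemma Rmult_unit_interval (a b : R) :
  0 <= a <= 1 -> 0 <= b <= 1 -> 0 <= a * b <= 1.
Proof. intros Ha Hb. split; nra. Qed.

Lemma Un_cv_of_geometric_bound (u : nat -> R) (l q C : R) :
  0 <= q < 1 -> (forall t, Rabs (u t - l) <= q ^ t * C) -> Un_cv u l.
Proof.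
  intros Hq Hu eps Heps.
  assert (HC : 0 < Rabs C + 1) by (pose proof (Rabs_pos C); lra).
  destruct (pow_lt_1_zero q ltac:(rewrite Rabs_pos_eq; lra) (eps / (Rabs C + 1)))
    as [N HN]; [apply Rdiv_lt_0_compat; lra|].
  exists N. intros t Ht. specialize (HN t Ht).
  rewrite Rabs_pos_eq in HN by (apply pow_le; lra).
  apply (Rmult_lt_compat_r (Rabs C + 1)) in HN; [|exact HC].
  replace (eps / (Rabs C + 1) * (Rabs C + 1)) with eps in HN by (field; lra).
  pose proof (Hu t). pose proof (Rle_abs C). pose proof (pow_le q t (proj1 Hq)).
  unfold R_dist. nra.
Qed.

Lemma ind_nonneg b : 0 <= ind b.
Proof. destruct b; simpl; lra. Qed.

Lemma sum_ind_le_1 (P : nat -> bool) N :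
  (forall a b, P a = true -> P b = true -> a = b) ->
  sum_f_R0 (fun n => ind (P n)) N <= 1.
Proof.
  intros HP. induction N as [|N IH]; simpl.
  - destruct (P 0%nat); simpl; lra.
  - destruct (P (S N)) eqn:HN; simpl; [|lra].
    rewrite sum_eq_R0; [lra|]. intros n Hn.
    destruct (P n) eqn:Hn'; [|reflexivity].
    specialize (HP _ _ HN Hn'). lia.
Qed.

Definition sum_drifts (f : Z -> R) : R := f (-1)%Z + f 0%Z + f 1%Z.

Lemma sum_drifts_le (f g : Z -> R) :
  (forall k, In k drifts -> f k <= g k) -> sum_drifts f <= sum_drifts g.
Proof.
  intros H. unfold sum_drifts.
  pose proof (H (-1)%Z ltac:(simpl; auto)). pose proof (H 0%Z ltac:(simpl; auto)).
  pose proof (H 1%Z ltac:(simpl; auto)). lra.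
Qed.

Lemma sum_drifts_nonneg (f : Z -> R) : (forall k, 0 <= f k) -> 0 <= sum_drifts f.
Proof.
  intros Hf. unfold sum_drifts.
  pose proof (Hf (-1)%Z). pose proof (Hf 0%Z). pose proof (Hf 1%Z). lra.
Qed.

Lemma term_le_sum_drifts (f : Z -> R) k :
  (forall k, 0 <= f k) -> In k drifts -> f k <= sum_drifts f.
Proof.
  intros Hf Hk. unfold sum_drifts.
  pose proof (Hf (-1)%Z). pose proof (Hf 0%Z). pose proof (Hf 1%Z).
  destruct Hk as [<-|[<-|[<-|[]]]]; lra.
Qed.

Lemma sum_drifts_abs_sub (f g : Z -> R) :
  Rabs (sum_drifts f - sum_drifts g) <= sum_drifts (fun k => Rabs (f k - g k)).
Proof.
  unfold sum_drifts.
  replace (f (-1)%Z + f 0%Z + f 1%Z - (g (-1)%Z + g 0%Z + g 1%Z))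
    with (f (-1)%Z - g (-1)%Z + (f 0%Z - g 0%Z) + (f 1%Z - g 1%Z)) by ring.
  pose proof (Rabs_triang (f (-1)%Z - g (-1)%Z + (f 0%Z - g 0%Z)) (f 1%Z - g 1%Z)).
  pose proof (Rabs_triang (f (-1)%Z - g (-1)%Z) (f 0%Z - g 0%Z)). lra.
Qed.

Lemma sum_f_R0_sum_drifts (f : nat -> Z -> R) N :
  sum_f_R0 (fun n => sum_drifts (f n)) N =
  sum_drifts (fun k => sum_f_R0 (fun n => f n k) N).
Proof. unfold sum_drifts. rewrite !plus_sum. reflexivity. Qed.

Lemma sum_drifts_pk pm p0 p1 c :
  pm + p0 + p1 = 1 -> sum_drifts (fun k => pk pm p0 p1 k * c) = c.
Proof. intros Hsum. unfold sum_drifts, pk; simpl. nra. Qed.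

Definition inflow (d : Z -> nat -> R) (k : Z) (i M : nat) : R :=
  sum_drifts (fun k' =>
    sum_f_R0 (fun n => d k' (S n) * ind (fail_step k' (S n) k i)) M).

Definition step (ps pm p0 p1 : R) (d : Z -> nat -> R) (k : Z) (i : nat) : R :=
  pk pm p0 p1 k *
  (ps * ind (Z.eqb (Z.of_nat i) (Z.max 1 (k + 1))) + (1 - ps) * inflow d k i (S i)).

Lemma law_S ps pm p0 p1 mu0 t k i :
  law ps pm p0 p1 mu0 (S t) k i = step ps pm p0 p1 (law ps pm p0 p1 mu0 t) k i.
Proof. unfold step, inflow, sum_drifts. cbn [law fold_right map drifts]. ring. Qed.

Definition mass (d : Z -> nat -> R) (N : nat) : R :=
  sum_f_R0 (fun n => sum_drifts (fun k => d k (S n))) N.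

Definition absdiff (a b : Z -> nat -> R) (k : Z) (i : nat) : R := Rabs (a k i - b k i).

Lemma mass_ext a b N :
  (forall k n, In k drifts -> a k (S n) = b k (S n)) -> mass a N = mass b N.
Proof.
  intros H. apply sum_eq. intros n _. unfold sum_drifts.
  rewrite !H by (simpl; auto). reflexivity.
Qed.

Lemma term_le_mass d k n N :
  (forall k n, 0 <= d k n) -> In k drifts -> (n <= N)%nat -> d k (S n) <= mass d N.
Proof.
  intros Hd Hk HnN. apply Rle_trans with (sum_drifts (fun k => d k (S n))).
  - apply (term_le_sum_drifts (fun k => d k (S n))); [intros; apply Hd | exact Hk].
  - apply (term_le_sum_f_R0 (fun n => sum_drifts (fun k => d k (S n)))); [|exact HnN].
    intros m. apply sum_drifts_nonneg. intros; apply Hd.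
Qed.

Lemma mass_le_infinite_sum d l N :
  (forall k n, 0 <= d k n) ->
  infinite_sum (fun n => sum_drifts (fun k => d k (S n))) l -> mass d N <= l.
Proof.
  intros Hd Hl. apply sum_incr; [exact Hl|].
  intros n. apply sum_drifts_nonneg. intros; apply Hd.
Qed.

Lemma mass_absdiff_le a b N :
  (forall k n, 0 <= a k n) -> (forall k n, In k drifts -> 0 <= b k n) ->
  mass (absdiff a b) N <= mass a N + mass b N.
Proof.
  intros Ha Hb. unfold mass. rewrite <- plus_sum. apply sum_Rle. intros n _.
  enough (sum_drifts (fun k => absdiff a b k (S n))
          <= sum_drifts (fun k => a k (S n) + b k (S n)))
    by (unfold sum_drifts in *; lra).
  apply sum_drifts_le. intros k Hk. unfold absdiff.
  pose proof (Ha k (S n)). pose proof (Hb k (S n) Hk).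
  unfold Rabs. destruct Rcase_abs; lra.
Qed.

Lemma fail_step_target_unique k' j k i i' :
  fail_step k' j k i = true -> fail_step k' j k i' = true -> i = i'.
Proof. unfold fail_step. rewrite !Z.eqb_eq. lia. Qed.

Lemma inflow_le_upper d k i M M' :
  (forall k n, 0 <= d k n) -> (M <= M')%nat -> inflow d k i M <= inflow d k i M'.
Proof.
  intros Hd HM. apply sum_drifts_le. intros k' _.
  apply sum_f_R0_le_upper; [|exact HM].
  intros n. apply Rmult_le_pos; [apply Hd | apply ind_nonneg].
Qed.

Lemma inflow_abs_sub a b k i M :
  Rabs (inflow a k i M - inflow b k i M) <= inflow (absdiff a b) k i M.
Proof.
  eapply Rle_trans; [apply sum_drifts_abs_sub|]. apply sum_drifts_le. intros k' _.
  rewrite <- minus_sum. eapply Rle_trans; [apply Rsum_abs|].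
  apply sum_Rle. intros n _. unfold absdiff.
  rewrite <- Rmult_minus_distr_r, Rabs_mult, (Rabs_pos_eq (ind _)) by apply ind_nonneg.
  lra.
Qed.

(* Each source state feeds at most one target Delta, so summing the inflow over the
   targets never counts a source twice. *)
Lemma sum_inflow_le_mass d k N M :
  (forall k n, 0 <= d k n) -> sum_f_R0 (fun n => inflow d k (S n) M) N <= mass d M.
Proof.
  intros Hd. unfold inflow, mass.
  rewrite (sum_f_R0_sum_drifts (fun n k' =>
    sum_f_R0 (fun m => d k' (S m) * ind (fail_step k' (S m) k (S n))) M)).
  rewrite (sum_f_R0_sum_drifts (fun n k' => d k' (S n))).
  apply sum_drifts_le. intros k' _.
  rewrite sum_f_R0_swap. apply sum_Rle. intros m _.
  rewrite (sum_eq _ (fun n => ind (fail_step k' (S m) k (S n)) * d k' (S m)))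
    by (intros; ring).
  rewrite <- scal_sum.
  assert (sum_f_R0 (fun n => ind (fail_step k' (S m) k (S n))) N <= 1).
  { apply sum_ind_le_1. intros a b Ha Hb.
    pose proof (fail_step_target_unique _ _ _ _ _ Ha Hb). lia. }
  pose proof (Hd k' (S m)). nra.
Qed.

Lemma sum_fail_step_single d k' k i n0 :
  (2 <= i)%nat -> Z.of_nat (S n0) = (Z.of_nat i - k + k' - 1)%Z -> (n0 <= S i)%nat ->
  sum_f_R0 (fun n => d k' (S n) * ind (fail_step k' (S n) k i)) (S i) = d k' (S n0).
Proof.
  intros Hi Hn0 Hle. rewrite (sum_f_R0_single _ _ n0 Hle).
  - unfold fail_step. rewrite (proj2 (Z.eqb_eq _ _)) by lia. simpl. ring.
  - intros n _ Hne. unfold fail_step. rewrite (proj2 (Z.eqb_neq _ _)) by lia. simpl. ring.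
Qed.

Lemma iterate_shifted_contraction (m : nat -> nat -> R) (c : R) :
  0 <= c -> (forall t N, m (S t) N <= c * m t (S (S N))) ->
  forall t N, m t N <= c ^ t * m O (N + 2 * t)%nat.
Proof.
  intros Hc Hm. induction t as [|t IH]; intros N.
  - rewrite Nat.add_0_r. simpl. lra.
  - eapply Rle_trans; [apply Hm|].
    replace (N + 2 * S t)%nat with (S (S N) + 2 * t)%nat by lia.
    simpl pow. rewrite Rmult_assoc. apply Rmult_le_compat_l; [exact Hc | apply IH].
Qed.

Section Chain.

Variables ps pm p0 p1 : R.
Hypothesis Hps : 0 < ps < 1.
Hypothesis Hpm : 0 <= pm <= 1.
Hypothesis Hp0 : 0 <= p0 <= 1.
Hypothesis Hp1 : 0 <= p1 <= 1.
Hypothesis Hsum : pm + p0 + p1 = 1.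

Lemma pk_nonneg k : In k drifts -> 0 <= pk pm p0 p1 k.
Proof. intros [<-|[<-|[<-|[]]]]; unfold pk; simpl; lra. Qed.

Lemma step_absdiff a b k i :
  In k drifts ->
  absdiff (step ps pm p0 p1 a) (step ps pm p0 p1 b) k i
  <= pk pm p0 p1 k * (1 - ps) * inflow (absdiff a b) k i (S i).
Proof.
  intros Hk. unfold absdiff at 1, step.
  replace (_ - _)
    with (pk pm p0 p1 k * (1 - ps) * (inflow a k i (S i) - inflow b k i (S i))) by ring.
  assert (0 <= pk pm p0 p1 k * (1 - ps))
    by (apply Rmult_le_pos; [now apply pk_nonneg | lra]).
  rewrite Rabs_mult, (Rabs_pos_eq (pk pm p0 p1 k * (1 - ps))) by assumption.
  apply Rmult_le_compat_l; [assumption | apply inflow_abs_sub].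
Qed.

Lemma mass_absdiff_step a b N :
  mass (absdiff (step ps pm p0 p1 a) (step ps pm p0 p1 b)) N
  <= (1 - ps) * mass (absdiff a b) (S (S N)).
Proof.
  set (e := absdiff a b). set (M := S (S N)).
  assert (He : forall k n, 0 <= e k n) by (intros; apply Rabs_pos).
  apply Rle_trans with
    (sum_f_R0 (fun n => sum_drifts (fun k =>
       inflow e k (S n) M * (pk pm p0 p1 k * (1 - ps)))) N).
  { apply sum_Rle. intros n Hn. apply sum_drifts_le. intros k Hk.
    eapply Rle_trans; [now apply step_absdiff|]. rewrite Rmult_comm.
    apply Rmult_le_compat_r; [apply Rmult_le_pos; [now apply pk_nonneg | lra]|].
    apply inflow_le_upper; [exact He | unfold M; lia]. }
  rewrite (sum_f_R0_sum_drifts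
             (fun n k => inflow e k (S n) M * (pk pm p0 p1 k * (1 - ps)))).
  rewrite <- (sum_drifts_pk pm p0 p1 ((1 - ps) * mass e M)) by exact Hsum.
  apply sum_drifts_le. intros k Hk.
  rewrite <- scal_sum, Rmult_assoc.
  apply Rmult_le_compat_l; [now apply pk_nonneg|].
  apply Rmult_le_compat_l; [lra | now apply sum_inflow_le_mass].
Qed.

Lemma pi_stat_fixed k i :
  In k drifts -> (1 <= i)%nat ->
  step ps pm p0 p1 (pi_stat ps pm p0 p1) k i = pi_stat ps pm p0 p1 k i.
Proof.
  intros Hk Hi.
  destruct i as [|[|[|[|[|m]]]]]; [lia| | | | |].
  1-4: destruct Hk as [<-|[<-|[<-|[]]]];
       unfold step, inflow, sum_drifts, pi_stat, pk, ind, fail_step; simpl;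
       replace pm with (1 - p0 - p1) by lra; ring.
  unfold step, inflow, sum_drifts.
  rewrite (proj2 (Z.eqb_neq _ _)) by (destruct Hk as [<-|[<-|[<-|[]]]]; lia).
  destruct Hk as [<-|[<-|[<-|[]]]];
    [ rewrite (sum_fail_step_single _ _ _ _ (S (S (S m)))),
        (sum_fail_step_single _ _ _ _ (S (S (S (S m))))),
        (sum_fail_step_single _ _ _ _ (S (S (S (S (S m)))))) by lia
    | rewrite (sum_fail_step_single _ _ _ _ (S (S m))),
        (sum_fail_step_single _ _ _ _ (S (S (S m)))),
        (sum_fail_step_single _ _ _ _ (S (S (S (S m))))) by lia
    | rewrite (sum_fail_step_single _ _ _ _ (S m)),
        (sum_fail_step_single _ _ _ _ (S (S m))),
        (sum_fail_step_single _ _ _ _ (S (S (S m)))) by lia ];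
    unfold pi_stat, pk, ind; simpl; replace pm with (1 - p0 - p1) by lra; ring.
Qed.

Lemma pi_stat_bounds k i : In k drifts -> 0 <= pi_stat ps pm p0 p1 k i <= 2.
Proof.
  intros Hk.
  assert (Hpf : 0 <= 1 - ps <= 1) by lra.
  assert (Hqm : 0 <= 1 - pm <= 1) by lra.
  assert (Hps' : 0 <= ps <= 1) by lra.
  assert (HF : 0 <= 1 - ps * (1 - pm) <= 1) by (split; nra).
  assert (Hpow : forall e, 0 <= (1 - ps) ^ e <= 1)
    by (intros; now apply pow_unit_interval).
  assert (0 <= pm * ps <= 1) by (apply Rmult_unit_interval; assumption).
  assert (0 <= 1 + (1 - ps) * (1 - pm) <= 2) by (split; nra).
  unfold pi_stat. destruct Hk as [<-|[<-|[<-|[]]]]; unfold pk; simpl;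
    repeat match goal with |- context [if ?b then _ else _] => destruct b end;
    try (split; nra);
    match goal with |- 0 <= ?X <= 2 => enough (0 <= X <= 1) by lra end;
    repeat apply Rmult_unit_interval; first [assumption | apply Hpow].
Qed.

Lemma pi_stat_succ k i :
  In k drifts -> (4 <= i)%nat ->
  pi_stat ps pm p0 p1 k (S i) = (1 - ps) * pi_stat ps pm p0 p1 k i.
Proof.
  intros Hk Hi. destruct i as [|[|[|[|m]]]]; [lia..|].
  destruct Hk as [<-|[<-|[<-|[]]]]; unfold pi_stat; simpl; ring.
Qed.

Lemma pi_stat_le_geometric k n :
  In k drifts -> (1 - ps) ^ 3 * pi_stat ps pm p0 p1 k (S n) <= 2 * (1 - ps) ^ n.
Proof.
  intros Hk. assert (Hpf : 0 <= 1 - ps <= 1) by lra.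
  assert (Hsmall : forall m, (m <= 3)%nat ->
            (1 - ps) ^ 3 * pi_stat ps pm p0 p1 k (S m) <= 2 * (1 - ps) ^ m).
  { intros m Hm. pose proof (pi_stat_bounds k (S m) Hk).
    pose proof (pow_le_pow_of_le_1 _ _ _ Hpf Hm).
    pose proof (pow_le (1 - ps) m (proj1 Hpf)). nra. }
  induction n as [|n IH]; [apply Hsmall; lia|].
  destruct (le_lt_dec (S n) 3) as [Hn|Hn]; [exact (Hsmall _ Hn)|].
  rewrite pi_stat_succ, <- (tech_pow_Rmult (1 - ps) n) by (assumption || lia). nra.
Qed.

Lemma mass_pi_stat_le N : mass (pi_stat ps pm p0 p1) N <= 6 / ((1 - ps) ^ 3 * ps).
Proof.
  assert (Hc : 0 < (1 - ps) ^ 3 * ps) by (apply Rmult_lt_0_compat; [apply pow_lt|]; lra).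
  apply (Rmult_le_reg_r _ _ _ Hc). unfold Rdiv.
  rewrite Rmult_assoc, Rinv_l, Rmult_1_r by lra.
  apply Rle_trans with (6 * sum_f_R0 (fun n => (1 - ps) ^ n) N * ps).
  - rewrite <- Rmult_assoc. apply Rmult_le_compat_r; [lra|].
    unfold mass. rewrite Rmult_comm, !scal_sum. apply sum_Rle. intros n _.
    unfold sum_drifts.
    pose proof (pi_stat_le_geometric (-1)%Z n ltac:(simpl; auto)).
    pose proof (pi_stat_le_geometric 0%Z n ltac:(simpl; auto)).
    pose proof (pi_stat_le_geometric 1%Z n ltac:(simpl; auto)). lra.
  - pose proof (geometric_partial_sum_le (1 - ps) N ltac:(lra)).
    replace (1 - (1 - ps)) with ps in * by ring. nra.
Qed.

Lemma mass_absdiff_law_succ mu0 t N :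
  mass (absdiff (law ps pm p0 p1 mu0 (S t)) (pi_stat ps pm p0 p1)) N
  <= (1 - ps) * mass (absdiff (law ps pm p0 p1 mu0 t) (pi_stat ps pm p0 p1)) (S (S N)).
Proof.
  rewrite (mass_ext _ (absdiff (step ps pm p0 p1 (law ps pm p0 p1 mu0 t))
                               (step ps pm p0 p1 (pi_stat ps pm p0 p1)))).
  - apply mass_absdiff_step.
  - intros k n Hk. unfold absdiff. now rewrite law_S, pi_stat_fixed by (auto; lia).
Qed.

End Chain.

Theorem lemma3 (ps pm p0 p1 : R) (mu0 : Z -> nat -> R)
  (Hps : 0 < ps < 1)
  (Hpm : 0 <= pm <= 1) (Hp0 : 0 <= p0 <= 1) (Hp1 : 0 <= p1 <= 1)
  (Hsum : pm + p0 + p1 = 1)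
  (* mu0 : an arbitrary initial probability law of (delta(0), Delta(0))
     on {-1,0,1} x {1,2,...} *)
  (Hmu0_nonneg : forall k i, 0 <= mu0 k i)
  (Hmu0_supp : forall k i, (i = 0%nat \/ ~ List.In k drifts) -> mu0 k i = 0)
  (Hmu0_mass : infinite_sum
                 (fun n => mu0 (-1)%Z (S n) + mu0 0%Z (S n) + mu0 1%Z (S n)) 1) :
  forall (k : Z) (i : nat), List.In k drifts -> (1 <= i)%nat ->
    Un_cv (fun t => law ps pm p0 p1 mu0 t k i) (pi_stat ps pm p0 p1 k i).
Proof.
  intros k i Hk Hi.
  set (e t := absdiff (law ps pm p0 p1 mu0 t) (pi_stat ps pm p0 p1)).
  apply (Un_cv_of_geometric_bound _ _ (1 - ps) (1 + 6 / ((1 - ps) ^ 3 * ps))); [lra|].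
  intros t. destruct i as [|n]; [lia|].
  apply Rle_trans with (mass (e t) n).
  { apply (term_le_mass (e t)); [intros; apply Rabs_pos | exact Hk | lia]. }
  eapply Rle_trans.
  { apply (iterate_shifted_contraction (fun t N => mass (e t) N) (1 - ps)); [lra|].
    intros t' N. now apply mass_absdiff_law_succ. }
  apply Rmult_le_compat_l; [apply pow_le; lra|].
  eapply Rle_trans.
  { apply mass_absdiff_le; [exact Hmu0_nonneg | intros; now apply pi_stat_bounds]. }
  apply Rplus_le_compat.
  - apply mass_le_infinite_sum; [exact Hmu0_nonneg | exact Hmu0_mass].
  - now apply mass_pi_stat_le.
Qed.
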